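(* Let $X$ be an exponential vector space over a field $K$ such that $X\smallsetminus X_0$ has a basis and $\dim X=[\alpha:\beta]$. Let $\gamma,\delta$ be cardinal numbers with $\gamma\leq\alpha$ and $\delta\leq\beta$. Then there exists a sub exponential vector space $Y$ of $X$ with $\dim Y=[\gamma:\delta]$ (in particular $Y\smallsetminus Y_0$ has a basis).
   Context: An exponential vector space (evs) over a field $K$ is a partially ordered set $(X,\leq)$ with a binary operation $+$ on $X$ and a map $K\times X\to X$, $(\alpha,x)\mapsto \alpha x$, such that: (A1) $(X,+)$ is a commutative semigroup with identity $\theta$; (A2) $x\leq y$ implies $x+z\leq y+z$ and $\alpha x\leq \alpha y$ for all $z\in X$, $\alpha\in K$; (A3) $\alpha(x+y)=\alpha x+\alpha y$, $\alpha(\beta x)=(\alpha\beta)x$, $(\alpha+\beta)x\leq \alpha x+\beta x$, $1x=x$; (A4) $\alpha x=\theta$ iff $\alpha=0$ or $x=\theta$; (A5) $x+(-1)x=\theta$ iff $x\in X_0$, where $X_0:=\{z\in X: y\not\leq z \text{ for all } y\in X\smallsetminus\{z\}\}$ (the set of minimal elements, called the primitive space; it is a vector space over $K$); (A6) for each $x\in X$ there is $p\in X_0$ with $p\leq x$. A subset $Y\subseteq X$ is a sub exponential vector space (subevs) if $Y$ is itself an evs under the restricted operations and order; its primitive space $Y_0$ is the set of minimal elements of $Y$. For $x\in X\smallsetminus X_0$ let $L(x):=\{z\in X: z\geq \alpha x+p \text{ for some } \alpha\in K\smallsetminus\{0\},\ p\in X_0\}$ (for a subevs, testing sets are computed inside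 $Y$ using $Y_0$). A subset $B\subseteq X\smallsetminus X_0$ generates $X\smallsetminus X_0$ if $X\smallsetminus X_0=\bigcup_{b\in B}L(b)$. Elements $x,y\in X\smallsetminus X_0$ are orderly dependent if $x\in L(y)$ or $y\in L(x)$, and orderly independent otherwise; $B$ is orderly independent if any two distinct members are orderly independent. A basis of $X\smallsetminus X_0$ is an orderly independent generating subset. All bases of $X\smallsetminus X_0$ have the same cardinality, denoted $\dim(X\smallsetminus X_0)$; $\dim X_0$ is the vector-space dimension of $X_0$ (taken as $0$ if $X_0=\{\theta\}$), and $\dim X:=[\dim(X\smallsetminus X_0):\dim X_0]$. *)

From HB Require Import structures.
From mathcomp Require Import all_boot all_algebra.
From mathcomp Require Import boolp classical_sets cardinality.
From Stdlib Require Import List.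
Set Implicit Arguments. Unset Strict Implicit. Unset Printing Implicit Defensive.
Import GRing.Theory.
Local Open Scope classical_set_scope.
Local Open Scope ring_scope.

Record evs_struct (K : fieldType) := EvsStruct {
  ev_carrier :> Type;
  ev_le : ev_carrier -> ev_carrier -> Prop;
  ev_add : ev_carrier -> ev_carrier -> ev_carrier;
  ev_smul : K -> ev_carrier -> ev_carrier }.

Section EVS.
Variables (K : fieldType) (E : evs_struct K).
Local Notation "x <=e y" := (ev_le x y) (at level 70).
Local Notation "x +e y" := (ev_add x y) (at level 50, left associativity).
Local Notation "a *e x" := (ev_smul a x) (at level 40).

Definition prim (S : set E) : set E :=
  [set z | S z /\ forall y, S y -> y <> z -> ~ (y <=e z)].

Definition is_evs_on (S : set E) (th : E) : Prop :=
  [/\ S th,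
      (forall x y, S x -> S y -> S (x +e y)),
      (forall (a : K) x, S x -> S (a *e x)),
      [/\ (forall x, S x -> x <=e x),
          (forall x y, S x -> S y -> x <=e y -> y <=e x -> x = y) &
          (forall x y z, S x -> S y -> S z -> x <=e y -> y <=e z -> x <=e z)] &
      [/\
      [/\ (forall x y z, S x -> S y -> S z -> x +e (y +e z) = (x +e y) +e z),
          (forall x y, S x -> S y -> x +e y = y +e x) &
          (forall x, S x -> x +e th = x)],
      (forall x y z (a : K), S x -> S y -> S z -> x <=e y ->
          x +e z <=e y +e z /\ a *e x <=e a *e y),
      (forall x y (a b : K), S x -> S y ->
          [/\ a *e (x +e y) = a *e x +e a *e y,
              a *e (b *e x) = (a * b) *e x,
              (a + b) *e x <=e a *e x +e b *e x &
              1 *e x = x]),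
      (forall (a : K) x, S x -> (a *e x = th <-> a = 0 \/ x = th)) &
      (forall x, S x ->
          (x +e (-1) *e x = th <-> prim S x) /\
          (exists p, prim S p /\ p <=e x))]].

Definition testing (S : set E) (x : E) : set E :=
  [set z | S z /\ exists (a : K) p, a <> 0 /\ prim S p /\ (a *e x +e p) <=e z].

Definition evs_basis (S : set E) (B : set E) : Prop :=
  [/\ B `<=` S `\` prim S,
      S `\` prim S = \bigcup_(b in B) testing S b &
      (forall x y, B x -> B y -> x <> y ->
          ~ testing S y x /\ ~ testing S x y)].

Definition lin_comb (th : E) (l : list (K * E)%type) : E :=
  foldr (fun p acc => (p.1 *e p.2) +e acc) th l.

Definition vs_basis (S : set E) (th : E) (C : set E) : Prop :=
  [/\ C `<=` prim S,
      (forall z, prim S z ->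
          exists l : list (K * E)%type, (forall p, List.In p l -> C p.2) /\ lin_comb th l = z) &
      (forall l : list (K * E)%type, (forall p, List.In p l -> C p.2) ->
          List.NoDup (map snd l) -> lin_comb th l = th ->
          forall p, List.In p l -> p.1 = 0)].

End EVS.

From mathcomp Require Import all_boot all_algebra.
From mathcomp Require Import boolp classical_sets cardinality.
From Stdlib Require Import List.

(* Pick a subset B' of the basis B with #|B'| = gamma and a subset C' of the
   Hamel basis C with #|C'| = delta, and let V be the linear span of C'.  The
   candidate is Y = V u U_(b in B') L_V(b), where L_V(b) is the testing set of b
   computed with V as primitive space.  Y is closed under + and scaling, its
   minimal elements are exactly V (so C' is a Hamel basis of Y_0), and B' is an
   orderly independent generating set of Y \ Y_0.  The one catch is axiom A6 in
   Y: a point above a b + p must lie above a point of V, which holds as soon as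
   theta <= b.  This is arranged beforehand by replacing every b by b - q_b for
   a primitive q_b <= b, a shift that preserves orderly independence. *)

Set Implicit Arguments. Unset Strict Implicit. Unset Printing Implicit Defensive.
Import GRing.Theory.
Local Open Scope classical_set_scope.
Local Open Scope ring_scope.

Section ExponentialVectorSpace.
Variables (K : fieldType) (E : evs_struct K) (th : E).

Local Notation "x <=e y" := (ev_le x y) (at level 70).
Local Notation "x +e y" := (ev_add x y) (at level 50, left associativity).
Local Notation "a *e x" := (ev_smul a x) (at level 40).
Local Notation X0 := (@prim K E setT).

Definition orderly_independent (S B : set E) : Prop :=
  forall x y, B x -> B y -> x <> y -> ~ testing S y x.

Lemma evs_basis_independent (S B : set E) :
  evs_basis S B -> orderly_independent S B.
Proof. by case=> _ _ indepB x y Bx By xy; case: (indepB x y Bx By xy). Qed.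

Lemma sub_orderly_independent (S B B' : set E) :
  B' `<=` B -> orderly_independent S B -> orderly_independent S B'.
Proof. by move=> B'B indepB x y /B'B Bx /B'B By; apply: indepB. Qed.

Hypothesis evsE : is_evs_on setT th.

Lemma ev_addrA (x y z : E) : x +e (y +e z) = x +e y +e z.
Proof. by case: evsE => _ _ _ _ [[addA _ _] _ _ _ _]; apply: addA. Qed.

Lemma ev_addrC (x y : E) : x +e y = y +e x.
Proof. by case: evsE => _ _ _ _ [[_ addC _] _ _ _ _]; apply: addC. Qed.

Lemma ev_addr0 (x : E) : x +e th = x.
Proof. by case: evsE => _ _ _ _ [[_ _ add0] _ _ _ _]; apply: add0. Qed.

Lemma ev_add0r (x : E) : th +e x = x.
Proof. by rewrite ev_addrC ev_addr0. Qed.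

Lemma ev_le_refl (x : E) : x <=e x.
Proof. by case: evsE => _ _ _ [le_refl _ _] _; apply: le_refl. Qed.

Lemma ev_le_anti (x y : E) : x <=e y -> y <=e x -> x = y.
Proof. by case: evsE => _ _ _ [_ le_anti _] _; apply: le_anti. Qed.

Lemma ev_le_trans (x y z : E) : x <=e y -> y <=e z -> x <=e z.
Proof. by case: evsE => _ _ _ [_ _ le_trans] _; apply: le_trans. Qed.

Lemma ev_leD2r (x y z : E) : x <=e y -> x +e z <=e y +e z.
Proof. by case: evsE => _ _ _ _ [_ mono _ _ _] /(mono x y z 0 I I I) []. Qed.

Lemma ev_leD2l (x y z : E) : x <=e y -> z +e x <=e z +e y.
Proof. by rewrite !(ev_addrC z); apply: ev_leD2r. Qed.

Lemma ev_leZ2 (a : K) (x y : E) : x <=e y -> a *e x <=e a *e y.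
Proof. by case: evsE => _ _ _ _ [_ mono _ _ _] /(mono x y x a I I I) []. Qed.

Lemma ev_scalerDr (a : K) (x y : E) : a *e (x +e y) = a *e x +e a *e y.
Proof. by case: evsE => _ _ _ _ [_ _ A3 _ _]; case: (A3 x y a 0 I I). Qed.

Lemma ev_scalerA (a b : K) (x : E) : a *e (b *e x) = (a * b) *e x.
Proof. by case: evsE => _ _ _ _ [_ _ A3 _ _]; case: (A3 x x a b I I). Qed.

Lemma ev_scale1r (x : E) : 1 *e x = x.
Proof. by case: evsE => _ _ _ _ [_ _ A3 _ _]; case: (A3 x x 1 1 I I). Qed.

Lemma ev_scalerDl_le (a b : K) (x : E) : (a + b) *e x <=e a *e x +e b *e x.
Proof. by case: evsE => _ _ _ _ [_ _ A3 _ _]; case: (A3 x x a b I I). Qed.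

Lemma ev_scaler_eq0 (a : K) (x : E) : a *e x = th <-> a = 0 \/ x = th.
Proof. by case: evsE => _ _ _ _ [_ _ _ A4 _]; apply: A4. Qed.

Lemma ev_primE (x : E) : x +e (-1) *e x = th <-> X0 x.
Proof. by case: evsE => _ _ _ _ [_ _ _ _ A56]; case: (A56 x I). Qed.

Lemma ev_prim_below (x : E) : exists p, X0 p /\ p <=e x.
Proof. by case: evsE => _ _ _ _ [_ _ _ _ A56]; case: (A56 x I). Qed.

Lemma ev_scale0r (x : E) : 0 *e x = th.
Proof. by apply/ev_scaler_eq0; left. Qed.

Lemma ev_scaler0 (a : K) : a *e th = th.
Proof. by apply/ev_scaler_eq0; right. Qed.

Lemma prim_addrN (p : E) : X0 p -> p +e (-1) *e p = th.
Proof. by move/ev_primE. Qed.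

Lemma prim_th : X0 th.
Proof. by apply/ev_primE; rewrite ev_scaler0 ev_addr0. Qed.

Lemma primD (p q : E) : X0 p -> X0 q -> X0 (p +e q).
Proof.
move=> /prim_addrN Np /prim_addrN Nq; apply/ev_primE.
have -> : p +e q +e (-1) *e (p +e q) = (p +e (-1) *e p) +e (q +e (-1) *e q).
  rewrite ev_scalerDr !ev_addrA; congr (_ +e _).
  by rewrite -!ev_addrA (ev_addrC q).
by rewrite Np Nq ev_addr0.
Qed.

Lemma primZ (a : K) (p : E) : X0 p -> X0 (a *e p).
Proof.
move=> /prim_addrN Np; apply/ev_primE.
by rewrite ev_scalerA mulrC -ev_scalerA -ev_scalerDr Np ev_scaler0.
Qed.

Lemma prim_le_eq (p z : E) : X0 p -> z <=e p -> z = p.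
Proof. by move=> [_ minp] zp; apply: contrapT => /(minp z I); apply. Qed.

Lemma nprimDr (b q : E) : ~ X0 b -> X0 q -> ~ X0 (b +e q).
Proof.
move=> nb pq pbq; apply: nb.
have -> : b = b +e q +e (-1) *e q by rewrite -ev_addrA prim_addrN // ev_addr0.
exact/primD/primZ.
Qed.

Lemma nprimZ (a : K) (b : E) : a != 0 -> ~ X0 b -> ~ X0 (a *e b).
Proof.
move=> a0 nb pab; apply: nb.
have -> : b = a^-1 *e (a *e b) by rewrite ev_scalerA mulVf // ev_scale1r.
exact: primZ.
Qed.

Lemma testing_refl (x : E) : testing setT x x.
Proof.
split=> //; exists 1, th; split; first exact/eqP/oner_neq0.
by split; [exact: prim_th | rewrite ev_scale1r ev_addr0; apply: ev_le_refl].
Qed.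

Definition span (S : set E) : set E :=
  [set z | exists l : list (K * E), (forall p, In p l -> S p.2) /\ lin_comb th l = z].

Lemma lin_combD (l1 l2 : list (K * E)) :
  lin_comb th (l1 ++ l2) = lin_comb th l1 +e lin_comb th l2.
Proof. by elim: l1 => [|p l IHl] /=; rewrite ?ev_add0r // IHl ev_addrA. Qed.

Lemma lin_combZ (a : K) (l : list (K * E)) :
  a *e lin_comb th l = lin_comb th (map (fun p => (a * p.1, p.2)) l).
Proof. by elim: l => [|p l IHl] /=; rewrite ?ev_scaler0 // ev_scalerDr IHl ev_scalerA. Qed.

Lemma span_th (S : set E) : span S th.
Proof. by exists nil. Qed.

Lemma spanD (S : set E) (x y : E) : span S x -> span S y -> span S (x +e y).
Proof.
move=> [l1 [Sl1 <-]] [l2 [Sl2 <-]]; exists (l1 ++ l2); split; last exact: lin_combD.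
by move=> p /(in_app_or _ _ _)[]; [apply: Sl1 | apply: Sl2].
Qed.

Lemma spanZ (S : set E) (a : K) (x : E) : span S x -> span S (a *e x).
Proof.
move=> [l [Sl <-]]; exists (map (fun p => (a * p.1, p.2)) l); split.
  by move=> p /(in_map_iff _ _ _)[q [<- /Sl]].
by rewrite lin_combZ.
Qed.

Lemma sub_span (S : set E) : S `<=` span S.
Proof.
move=> c Sc; exists [:: (1, c)]; split; last by rewrite /= ev_addr0 ev_scale1r.
by move=> p [<- | []].
Qed.

Lemma span_prim (S : set E) : S `<=` X0 -> span S `<=` X0.
Proof.
move=> S0 _ [l [Sl <-]]; elim: l Sl => [|[a c] l IHl] Sl /=; first exact: prim_th.
apply: primD; first by apply/primZ/S0; apply: (Sl (a, c)); left.
by apply: IHl => p lp; apply: Sl; right.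
Qed.

Definition prim_part (x : E) : E := sval (cid (ev_prim_below x)).

Lemma prim_part_prim (x : E) : X0 (prim_part x).
Proof. by rewrite /prim_part; case: (cid _) => p []. Qed.

Lemma prim_part_le (x : E) : prim_part x <=e x.
Proof. by rewrite /prim_part; case: (cid _) => p []. Qed.

Definition shift (b : E) : E := b +e (-1) *e prim_part b.

Lemma shiftK (b : E) : shift b +e prim_part b = b.
Proof.
rewrite /shift -ev_addrA (ev_addrC _ (prim_part b)) prim_addrN ?ev_addr0 //.
exact: prim_part_prim.
Qed.

Lemma shift_ge0 (b : E) : th <=e shift b.
Proof.
rewrite -(prim_addrN (prim_part_prim b)) /shift.
exact/ev_leD2r/prim_part_le.
Qed.

Lemma shift_nprim (b : E) : ~ X0 b -> ~ X0 (shift b).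
Proof. by move=> nb; apply/nprimDr/primZ/prim_part_prim. Qed.

Lemma testing_shift (x y : E) : testing setT (shift y) (shift x) -> testing setT y x.
Proof.
move=> [_ [a [p [a0 [p0 le_yx]]]]]; split=> //.
exists a, (a *e ((-1) *e prim_part y) +e p +e prim_part x); split=> //; split.
  by apply/primD/prim_part_prim/primD => //; apply/primZ/primZ/prim_part_prim.
rewrite -{2}(shiftK x) !ev_addrA -ev_scalerDr.
exact: ev_leD2r.
Qed.

Lemma shift_inj (B : set E) : orderly_independent setT B -> {in B &, injective shift}.
Proof.
move=> indepB x y /set_mem Bx /set_mem By shift_xy; apply: contrapT => xy.
by apply: (indepB x y Bx By xy); apply: testing_shift; rewrite shift_xy; apply: testing_refl.
Qed.

Lemma orderly_independent_shift (B : set E) :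
  orderly_independent setT B -> orderly_independent setT (shift @` B).
Proof.
move=> indepB _ _ [x Bx <-] [y By <-] sxy /testing_shift.
by apply: indepB => // xy; apply: sxy; rewrite xy.
Qed.

Section SubEvs.
Variables (Cp BB : set E).
Hypotheses (Cp_prim : Cp `<=` X0) (BB_nprim : forall b, BB b -> ~ X0 b).
Hypothesis BB_ge0 : forall b, BB b -> th <=e b.

(* The union of the testing sets [L(b)], [b] in [BB], with [span Cp] in the
   role of the primitive space. *)
Definition cone : set E :=
  [set z | exists b a p, [/\ BB b, a <> 0, span Cp p & a *e b +e p <=e z]].

Definition subevs : set E := span Cp `|` cone.

Lemma cone_above_span (z : E) : cone z -> exists2 p, span Cp p & p <=e z.
Proof.
move=> [b [a [p [BBb _ Vp le_z]]]]; exists p => //; apply: ev_le_trans le_z.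
by rewrite -{1}(ev_add0r p) -(ev_scaler0 a); apply/ev_leD2r/ev_leZ2/BB_ge0.
Qed.

Lemma subevs_above_span (z : E) : subevs z -> exists2 p, span Cp p & p <=e z.
Proof. by case=> [Vz | /cone_above_span //]; exists z => //; apply: ev_le_refl. Qed.

Lemma cone_nprim (z : E) : cone z -> ~ X0 z.
Proof.
move=> [b [a [p [BBb a0 Vp le_z]]]] z0.
have abp0 : X0 (a *e b +e p) by rewrite (prim_le_eq z0 le_z).
by apply: (nprimDr (nprimZ _ (BB_nprim BBb)) (span_prim Cp_prim Vp) abp0); apply/eqP.
Qed.

Lemma prim_subevs (z : E) : prim subevs z <-> span Cp z.
Proof.
split=> [[[// | cz] minz] | Vz]; last first.
  by split; [left | move=> y _; have [_ /(_ y I)] := span_prim Cp_prim Vz].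
have [p Vp le_pz] := cone_above_span cz; exfalso.
apply: (minz p (or_introl Vp)) le_pz => pz.
by apply: (cone_nprim cz); rewrite -pz; apply: span_prim Vp.
Qed.

Lemma subevs_primE (z : E) : subevs z -> X0 z <-> prim subevs z.
Proof.
rewrite prim_subevs => -[Vz | cz]; first by split=> // _; apply: span_prim Vz.
by split=> [/(cone_nprim cz) | /(span_prim Cp_prim)].
Qed.

Lemma coneD (x y : E) : cone x -> subevs y -> cone (x +e y).
Proof.
move=> [b [a [p [BBb a0 Vp le_x]]]] /subevs_above_span[q Vq le_qy].
exists b, a, (p +e q); split => //; first exact: spanD.
by rewrite ev_addrA; apply: ev_le_trans (ev_leD2r q le_x) (ev_leD2l _ le_qy).
Qed.

Lemma subevsD (x y : E) : subevs x -> subevs y -> subevs (x +e y).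
Proof.
move=> [Vx | cx] Yy; last by right; apply: coneD.
case: Yy => [Vy | cy]; first by left; apply: spanD.
by right; rewrite ev_addrC; apply: coneD => //; left.
Qed.

Lemma subevsZ (a : K) (x : E) : subevs x -> subevs (a *e x).
Proof.
move=> [Vx | [b [c [p [BBb c0 Vp le_x]]]]]; first by left; apply: spanZ.
have [-> | a0] := eqVneq a 0; first by left; rewrite ev_scale0r; apply: span_th.
right; exists b, (a * c), (a *e p); split => //; last 1 first.
- by rewrite -ev_scalerA -ev_scalerDr; apply: ev_leZ2.
- by apply/eqP; rewrite mulf_neq0 //; apply/eqP.
- exact: spanZ.
Qed.

Lemma subevs_is_evs : is_evs_on subevs th.
Proof.
split.
- by left; apply: span_th.
- exact: subevsD.
- by move=> a x; apply: subevsZ.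
- split=> [x _ | x y _ _ | x y z _ _ _]; [exact: ev_le_refl | exact: ev_le_anti | exact: ev_le_trans].
split.
- by split=> *; [exact: ev_addrA | exact: ev_addrC | exact: ev_addr0].
- by move=> x y z a _ _ _ le_xy; split; [apply: ev_leD2r | apply: ev_leZ2].
- by move=> x y a b _ _; split; rewrite ?ev_scalerDr ?ev_scalerA ?ev_scale1r //; apply: ev_scalerDl_le.
- by move=> a x _; apply: ev_scaler_eq0.
- move=> x Yx; split; first by rewrite -subevs_primE //; apply: ev_primE.
  by have [p Vp le_px] := subevs_above_span Yx; exists p; rewrite prim_subevs.
Qed.

Lemma BB_cone : BB `<=` cone.
Proof.
move=> b BBb; exists b, 1, th; split => //; first exact/eqP/oner_neq0.
- exact: span_th.
- by rewrite ev_scale1r ev_addr0; apply: ev_le_refl.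
Qed.

Lemma testing_subevs (b z : E) : testing subevs b z -> testing setT b z.
Proof.
move=> [_ [a [p [a0 [/prim_subevs Vp le_z]]]]]; split => //.
by exists a, p; split => //; split => //; apply: span_prim Vp.
Qed.

Lemma subevs_basis : orderly_independent setT BB -> evs_basis subevs BB.
Proof.
move=> indepBB; split.
- move=> b BBb; split; first by right; apply: BB_cone.
  by move/prim_subevs/(span_prim Cp_prim); apply: BB_nprim.
- apply/seteqP; split=> [z [[Vz | cz] nz] | z [b BBb [Yz [a [p [a0 [Vp le_z]]]]]]].
  + by exfalso; apply/nz/prim_subevs.
  + have [b [a [p [BBb a0 Vp le_z]]]] := cz.
    exists b => //; split; first by right.
    by exists a, p; split => //; split => //; apply/prim_subevs.
  + split=> // /prim_subevs/(span_prim Cp_prim); apply: cone_nprim.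
    by exists b, a, p; split => //; apply/prim_subevs.
- move=> x y BBx BBy xy; split=> /testing_subevs; first exact: indepBB.
  by apply: indepBB => // yx; apply: xy.
Qed.

Lemma subevs_vs_basis (C : set E) :
  vs_basis setT th C -> Cp `<=` C -> vs_basis subevs th Cp.
Proof.
move=> [_ _ indepC] CpC; split.
- by move=> c Cpc; apply/prim_subevs/sub_span.
- by move=> z /prim_subevs[l [Cpl <-]]; exists l.
- by move=> l Cpl; apply: indepC => p /Cpl /CpC.
Qed.

End SubEvs.
End ExponentialVectorSpace.

Local Open Scope card_scope.

Theorem mainTheorem9 (K : fieldType) (E : evs_struct K) (th : E)
    (B C : set E) (TG TD : Type) (G : set TG) (D : set TD) :
  is_evs_on setT th ->
  evs_basis setT B ->
  vs_basis setT th C ->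
  G #<= B -> D #<= C ->
  exists (Y : set E) (thY : E) (BY CY : set E),
    [/\ is_evs_on Y thY,
        evs_basis Y BY,
        vs_basis Y thY CY,
        BY #= G &
        CY #= D].
Proof.
move=> evsE basisB basisC /card_subP[B' B'G B'B] /card_subP[C' C'D C'C].
have indepB' : orderly_independent setT B'.
  exact: sub_orderly_independent B'B (evs_basis_independent basisB).
have C'_prim : C' `<=` prim setT by case: basisC => C0 _ _; apply: subset_trans C0.
have B'_shift_nprim : forall b, (shift evsE @` B') b -> ~ prim setT b.
  by case: basisB => B_nprim _ _ _ [b /B'B/B_nprim[_ nb] <-]; apply: shift_nprim.
have B'_shift_ge0 : forall b, (shift evsE @` B') b -> ev_le th b.
  by move=> _ [b _ <-]; apply: shift_ge0.
exists (subevs th C' (shift evsE @` B')), th, (shift evsE @` B'), C'; split.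
- exact: subevs_is_evs.
- exact/subevs_basis/orderly_independent_shift.
- exact: subevs_vs_basis basisC C'C.
- exact: card_eq_trans (inj_card_eq (shift_inj indepB')) B'G.
- exact: C'D.
Qed.
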